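(* Let $N\ge2$, $x_1>x_2>\cdots>x_N$ be real, $\rho=\sum_{j=1}^N\rho_j\delta_{x_j}$ with $\rho_j>0$, $\sum\rho_j=1$, and $\rho_t=e^{2tx}d\rho(x)/\int e^{2tx}d\rho(x)$. For $1\le j\le N$ let $x_1^{(j)}(t)>\cdots>x_j^{(j)}(t)$ be the zeros of the monic orthogonal polynomial $P_j(x;\rho_t)$. Then for each $j=1,\dots,N-1$ and $k=1,\dots,j$ there is a constant $C$ such that for all $t\ge0$, \[ |x_k^{(j)}(t)-x_k|\le C\,e^{-2t(x_k-x_{j+1})}. \]
   Context: $P_j(x;\rho_t)$ is the unique monic polynomial of degree $j$ orthogonal in $L^2(\rho_t)$ to all polynomials of degree less than $j$. *)

From HB Require Import structures.
From mathcomp Require Import all_boot all_order all_algebra.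
From mathcomp Require Import reals.
From mathcomp.analysis Require Import sequences exp.
Set Implicit Arguments. Unset Strict Implicit. Unset Printing Implicit Defensive.
Import Order.TTheory GRing.Theory Num.Theory.
Local Open Scope ring_scope.

(* Atoms are indexed 0..N-1 (paper's x_1,...,x_N is x 0, ..., x (N-1)). *)

Definition rho_t (R : realType) (N : nat) (x rho : nat -> R) (t : R) (i : nat) : R :=
  rho i * expR (2 * t * x i) / \sum_(l < N) rho l * expR (2 * t * x l).

Definition ip_t (R : realType) (N : nat) (x rho : nat -> R) (t : R)
  (p q : {poly R}) : R :=
  \sum_(i < N) rho_t N x rho t i * p.[x i] * q.[x i].

Definition monic_orth_poly (R : realType) (N : nat) (x rho : nat -> R) (t : R)
  (j : nat) (P : {poly R}) : Prop :=
  [/\ P \is monic, size P = j.+1 &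
      forall q : {poly R}, (size q <= j)%N -> ip_t N x rho t P q = 0].

From HB Require Import structures.
From mathcomp Require Import all_boot all_order all_algebra.
From mathcomp Require Import reals.
From mathcomp.analysis Require Import sequences exp.
From mathcomp Require Import ring lra zify.
Set Implicit Arguments. Unset Strict Implicit. Unset Printing Implicit Defensive.
Import Order.TTheory GRing.Theory Num.Theory.
Local Open Scope ring_scope.

(* Write w for the weights of rho_t, D = x_0 - x_{N-1} and g > 0 for the smallest gap
   between nodes.  Orthogonality first gives the interlacing x_{N-1} <= z_m <= x_m.
   Testing it against q_k = prod_{l < j, l <> k} (X - x_l), which vanishes at every node
   x_i with i < j except x_k, leaves only the term at x_k and the terms at x_i, i >= j;
   since w_i / w_k <= e^{-2t(x_k - x_j)} / rho_k for i >= j, this bounds |P(x_k)| by a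
   constant times e^{-2t(x_k - x_j)}.  Then induct on k: if every earlier zero z_l is
   within g/2 of x_l, all factors of P(x_k) other than x_k - z_k are at least g/2, so
   |z_k - x_k| <= |P(x_k)| / (g/2)^(j-1); otherwise some z_l is far from x_l, so by
   induction e^{-2t(x_l - x_j)}, hence e^{-2t(x_k - x_j)}, is bounded below, and the
   trivial bound |z_k - x_k| <= D already has the required form. *)

Lemma decr_le (R : realDomainType) (n : nat) (f : nat -> R) :
  (forall i l, (i < l < n)%N -> f l < f i) ->
  forall i l, (i <= l < n)%N -> f l <= f i.
Proof.
move=> f_decr i l /andP[]; rewrite leq_eqVlt => /orP[/eqP-> //|il ln].
by rewrite ltW // f_decr // il.
Qed.

Lemma exists_pos_lower_bound (R : realDomainType) (n : nat) (f : nat -> R) :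
  (forall i, (i < n)%N -> 0 < f i) ->
  exists2 m, 0 < m & forall i, (i < n)%N -> m <= f i.
Proof.
elim: n => [|n IH] f_gt0; first by exists 1.
have [m m_gt0 le_m] := IH (fun i lt_in => f_gt0 i (ltnW lt_in)).
exists (Order.min m (f n)); first by rewrite lt_min m_gt0 f_gt0.
move=> i; rewrite ltnS leq_eqVlt => /orP[/eqP->|lt_in]; first by rewrite ge_min lexx orbT.
by rewrite ge_min le_m.
Qed.

Lemma exists_gap (R : realDomainType) (n : nat) (f : nat -> R) :
  (forall i l, (i < l < n)%N -> f l < f i) ->
  exists2 g, 0 < g & forall i l, (i < l < n)%N -> f l + g <= f i.
Proof.
move=> f_decr; have [|g g_gt0 le_g] := @exists_pos_lower_bound _ n.-1 (fun i => f i - f i.+1).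
  by move=> i ilt; rewrite subr_gt0 f_decr //; lia.
exists g => // i l /andP[il ln]; have l_pos : (0 < l)%N by apply: leq_ltn_trans il.
have := le_g l.-1; rewrite prednK // => /(_ ltac:(lia)).
have := decr_le f_decr (i := i) (l := l.-1); rewrite -ltnS prednK // il /=.
move=> /(_ ltac:(lia)); lra.
Qed.

Lemma bump_lt k l n : (l < n.-1)%N -> (bump k l < n)%N.
Proof. by rewrite /bump; case: leqP; lia. Qed.

Lemma unbump_lt k i n : (k < n)%N -> (i < n)%N -> i != k -> (unbump k i < n.-1)%N.
Proof. by rewrite /unbump; case: ltnP; lia. Qed.

Lemma horner_prod_XsubC (R : comNzRingType) (I : Type) (r : seq I) (p : pred I)
    (F : I -> R) (y : R) :
  (\prod_(i <- r | p i) ('X - (F i)%:P)).[y] = \prod_(i <- r | p i) (y - F i).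
Proof. by rewrite horner_prod; apply: eq_bigr => i _; rewrite hornerXsubC. Qed.

Lemma norm_prod_nat_le (R : numDomainType) (a b : nat) (F : nat -> R) (c : R) :
  (forall l, (a <= l < b)%N -> `|F l| <= c) -> `|\prod_(a <= l < b) F l| <= c ^+ (b - a).
Proof.
move=> F_le; rewrite normr_prod -prodr_const_nat big_seq [leRHS]big_seq.
by apply: ler_prod => l; rewrite mem_index_iota normr_ge0 => /F_le.
Qed.

Lemma norm_prod_nat_ge (R : numDomainType) (a b : nat) (F : nat -> R) (c : R) :
  0 <= c -> (forall l, (a <= l < b)%N -> c <= `|F l|) -> c ^+ (b - a) <= `|\prod_(a <= l < b) F l|.
Proof.
move=> c_ge0 F_ge; rewrite normr_prod -prodr_const_nat big_seq [leRHS]big_seq.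
by apply: ler_prod => l; rewrite mem_index_iota c_ge0 => /F_ge.
Qed.

(* q_k = prod_{l < j, l <> k} (X - x_l): [bump k] enumerates the indices below j except k. *)
Definition lagrange_numerator (R : nzRingType) (x : nat -> R) (j k : nat) : {poly R} :=
  \prod_(0 <= l < j.-1) ('X - (x (bump k l))%:P).

Lemma size_lagrange_numerator (R : nzRingType) (x : nat -> R) (j k : nat) :
  (k < j)%N -> size (lagrange_numerator x j k) = j.
Proof. by move=> kj; rewrite size_prod_XsubC size_iota; lia. Qed.

Lemma lagrange_numerator_node_eq0 (R : idomainType) (x : nat -> R) (j k i : nat) :
  (k < j)%N -> (i < j)%N -> i != k -> (lagrange_numerator x j k).[x i] = 0.
Proof.
move=> kj ij ik; apply/eqP; rewrite horner_prod_XsubC prodf_seq_eq0; apply/hasP.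
exists (unbump k i); first by rewrite mem_index_iota unbump_lt.
by rewrite unbumpK ?inE // subrr eqxx.
Qed.

Section DiscreteOrthogonalZeros.
Variables (R : realFieldType) (N j : nat) (x w z : nat -> R) (P : {poly R}).
Hypothesis j_le_N : (j <= N)%N.
Hypothesis x_decr : forall i l, (i < l < N)%N -> x l < x i.
Hypothesis w_gt0 : forall i, (i < N)%N -> 0 < w i.
Hypothesis P_orth : forall q : {poly R},
  (size q <= j)%N -> \sum_(i < N) w i * P.[x i] * q.[x i] = 0.
Hypothesis z_decr : forall i l, (i < l < j)%N -> z l < z i.
Hypothesis P_prod : P = \prod_(0 <= i < j) ('X - (z i)%:P).

Lemma x_inj a b : (a < N)%N -> (b < N)%N -> x a = x b -> a = b.
Proof.
move=> aN bN xab; case: (ltngtP a b) => // [ab|ba].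
  by have := @x_decr a b; rewrite ab bN xab ltxx => /(_ isT).
by have := @x_decr b a; rewrite ba aN xab ltxx => /(_ isT).
Qed.

Lemma size_gt_of_sqr_sum_eq0 (c : nat -> R) (r : {poly R}) (m : nat) :
  r != 0 -> (forall i, (i < N)%N -> 0 <= c i) -> (forall i, (m <= i < N)%N -> 0 < c i) ->
  \sum_(i < N) c i * r.[x i] ^+ 2 = 0 -> (N - m < size r)%N.
Proof.
move=> r_neq0 c_ge0 c_gt0 sum_eq0.
have term_eq0 :=
  psumr_eq0P (fun (i : 'I_N) _ => mulr_ge0 (c_ge0 i (ltn_ord i)) (sqr_ge0 _)) sum_eq0.
have root_r i : (m <= i < N)%N -> root r (x i).
  case/andP=> mi iN; have := term_eq0 (Ordinal iN) isT; rewrite /root /=.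
  by move/eqP; rewrite mulf_eq0 expf_eq0 gt_eqF ?c_gt0 ?mi //= => /andP[_].
have := max_poly_roots (rs := [seq x i | i <- index_iota m N]) r_neq0.
rewrite size_map size_iota; apply.
  by apply/allP => y /mapP[i]; rewrite mem_index_iota => /root_r rxi ->.
rewrite map_inj_in_uniq ?iota_uniq // => a b; rewrite !mem_index_iota.
by move=> /andP[_ aN] /andP[_ bN]; apply: x_inj.
Qed.

Lemma zero_le_node m : (m < j)%N -> z m <= x m.
Proof.
(* Were x_m < z_m, then P * (B * Rz) = (A * B) * Rz^2 with A * B < 0 at x_m, ..., x_{N-1}
   and B = 0 at the other nodes, so Rz would vanish at N - m > deg Rz nodes. *)
move=> mj; rewrite leNgt; apply/negP => xm_lt_zm.
set A := \prod_(0 <= l < m.+1) ('X - (z l)%:P).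
set Rz := \prod_(m.+1 <= l < j) ('X - (z l)%:P).
set B := \prod_(0 <= l < m) ('X - (x l)%:P).
have P_split : P = A * Rz by rewrite P_prod /A /Rz -big_cat_nat // ltnW.
have B_root i : (i < m)%N -> B.[x i] = 0.
  move=> im; apply/eqP; rewrite horner_prod_XsubC prodf_seq_eq0.
  by apply/hasP; exists i; rewrite ?mem_index_iota ?subrr ?eqxx.
have AB_lt0 i : (m <= i < N)%N -> A.[x i] * B.[x i] < 0.
  move=> /andP[mi iN]; have xi_le_xm : x i <= x m by apply: (decr_le x_decr); rewrite mi.
  rewrite !horner_prod_XsubC big_nat_recr //= mulrAC -big_split /=.
  rewrite pmulr_rlt0 ?subr_lt0; first exact: le_lt_trans xm_lt_zm.
  rewrite big_seq; apply: prodr_gt0 => l; rewrite mem_index_iota => /andP[_ lm].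
  have zm_le_zl : z m <= z l by apply: (decr_le z_decr); rewrite ltnW.
  have xi_lt_xl : x i < x l by apply: x_decr; rewrite (leq_trans lm mi).
  by rewrite nmulr_rgt0 ?subr_lt0 //; lra.
set c := fun i => - (w i * (A.[x i] * B.[x i])).
have c_gt0 i : (m <= i < N)%N -> 0 < c i.
  by move=> miN; rewrite oppr_gt0 pmulr_rlt0 ?AB_lt0 ?w_gt0 //; case/andP: miN.
have c_ge0 i : (i < N)%N -> 0 <= c i.
  move=> iN; case: (ltnP i m) => [im|mi]; first by rewrite /c B_root // !mulr0 oppr0.
  by rewrite ltW // c_gt0 // mi.
have Rz_monic : Rz \is monic by apply: monic_prod_XsubC.
have sum_eq0 : \sum_(i < N) c i * Rz.[x i] ^+ 2 = 0.
  have size_BRz : (size (B * Rz)%R <= j)%N.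
    rewrite size_Mmonic ?monic_neq0 ?monic_prod_XsubC // !size_prod_XsubC !size_iota.
    lia.
  transitivity (- \sum_(i < N) w i * P.[x i] * (B * Rz).[x i]).
    by rewrite -sumrN; apply: eq_bigr => i _; rewrite P_split !hornerM /c; ring.
  by rewrite P_orth ?oppr0.
have := size_gt_of_sqr_sum_eq0 (monic_neq0 Rz_monic) c_ge0 c_gt0 sum_eq0.
rewrite size_prod_XsubC size_iota; lia.
Qed.

Lemma last_node_le_zero m : (m < j)%N -> x N.-1 <= z m.
Proof.
move=> mj; have j_gt0 : (0 < j)%N by apply: leq_ltn_trans mj.
suff last_zero : x N.-1 <= z j.-1.
  by apply: (le_trans last_zero); apply: (decr_le z_decr); lia.
rewrite leNgt; apply/negP => zj_lt.
set Rz := \prod_(0 <= i < j.-1) ('X - (z i)%:P).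
have P_split : P = Rz * ('X - (z j.-1)%:P).
  by rewrite P_prod -{1}(prednK j_gt0) big_nat_recr.
set c := fun i => w i * (x i - z j.-1).
have c_gt0 i : (0 <= i < N)%N -> 0 < c i.
  move=> /= iN; rewrite mulr_gt0 ?w_gt0 // subr_gt0 (lt_le_trans zj_lt) //.
  by apply: (decr_le x_decr); lia.
have Rz_monic : Rz \is monic by apply: monic_prod_XsubC.
have sum_eq0 : \sum_(i < N) c i * Rz.[x i] ^+ 2 = 0.
  have size_Rz : (size Rz <= j)%N by rewrite size_prod_XsubC size_iota; lia.
  transitivity (\sum_(i < N) w i * P.[x i] * Rz.[x i]); last exact: P_orth.
  by apply: eq_bigr => i _; rewrite P_split hornerM hornerXsubC /c; ring.
have c_ge0 i (iN : (i < N)%N) : 0 <= c i := ltW (c_gt0 i iN).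
have := size_gt_of_sqr_sum_eq0 (monic_neq0 Rz_monic) c_ge0 c_gt0 sum_eq0.
rewrite size_prod_XsubC size_iota; lia.
Qed.

Lemma node_bounds i : (i < N)%N -> x N.-1 <= x i <= x 0.
Proof.
move=> iN; have N_gt0 : (0 < N)%N := leq_ltn_trans (leq0n i) iN.
rewrite !(decr_le x_decr) //.
by rewrite -[(i <= _)%N]ltnS prednK // iN leqnn.
Qed.

Local Notation D := (x 0 - x N.-1).

Lemma node_span_ge0 : (0 < N)%N -> 0 <= D.
Proof. by move=> N_gt0; have /andP[] := node_bounds N_gt0; lra. Qed.

Lemma dist_node_zero_le i l : (i < N)%N -> (l < j)%N -> `|x i - z l| <= D.
Proof.
move=> iN lj; have /andP[? ?] := node_bounds iN.
have /andP[_ ?] := node_bounds (leq_trans lj j_le_N).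
have := zero_le_node lj; have := last_node_le_zero lj.
rewrite ler_norml; lra.
Qed.

Lemma dist_nodes_le i l : (i < N)%N -> (l < N)%N -> `|x i - x l| <= D.
Proof.
move=> /node_bounds/andP[? ?] /node_bounds/andP[? ?].
rewrite ler_norml; lra.
Qed.

Lemma norm_horner_P_node_le i : (i < N)%N -> `|P.[x i]| <= D ^+ j.
Proof.
move=> iN; rewrite P_prod horner_prod_XsubC -[j in D ^+ j]subn0.
by apply: norm_prod_nat_le => l /andP[_ lj]; apply: dist_node_zero_le.
Qed.

Lemma norm_lagrange_numerator_node_le k i :
  (i < N)%N -> `|(lagrange_numerator x j k).[x i]| <= D ^+ j.-1.
Proof.
move=> iN; rewrite horner_prod_XsubC -[X in D ^+ X]subn0.
apply: norm_prod_nat_le => l /andP[_ lj]; apply: dist_nodes_le => //.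
by apply: leq_trans j_le_N; apply: bump_lt.
Qed.

Section NodeGap.
Variable g : R.
Hypothesis g_gt0 : 0 < g.
Hypothesis gap : forall a b, (a < b < N)%N -> x b + g <= x a.

Lemma gap_le_dist_nodes a b : (a < N)%N -> (b < N)%N -> a != b -> g <= `|x a - x b|.
Proof.
move=> aN bN; case: ltngtP => // [ab|ba] _.
  by have := @gap a b; rewrite ab bN ler_normr => /(_ isT) ?; lra.
by have := @gap b a; rewrite ba aN ler_normr => /(_ isT) ?; lra.
Qed.

Lemma norm_lagrange_numerator_self_ge k :
  (k < j)%N -> g ^+ j.-1 <= `|(lagrange_numerator x j k).[x k]|.
Proof.
move=> kj; rewrite horner_prod_XsubC -[X in g ^+ X]subn0.
apply: norm_prod_nat_ge (ltW g_gt0) _ => l /andP[_ lj].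
apply: gap_le_dist_nodes; rewrite ?neq_bump //; first lia.
by apply: leq_trans j_le_N; apply: bump_lt.
Qed.

Lemma weight_norm_horner_P_node_le k : (k < j)%N ->
  w k * `|P.[x k]| * g ^+ j.-1 <= (\sum_(i < N | (j <= i)%N) w i) * (D ^+ j * D ^+ j.-1).
Proof.
move=> kj; have kN : (k < N)%N by apply: leq_trans j_le_N.
set F := fun i : nat => w i * P.[x i] * (lagrange_numerator x j k).[x i].
have sum_F : \sum_(i < N) F i = 0 by apply: P_orth; rewrite size_lagrange_numerator.
have head_F : \sum_(i < N | ~~ (j <= i)%N) F i = F k.
  rewrite (bigD1 (Ordinal kN)) /= -?ltnNge // big1 ?addr0 // => i /andP[ij ik].
  by rewrite /F lagrange_numerator_node_eq0 ?mulr0 // ltnNge.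
have tail_F : F k = - \sum_(i < N | (j <= i)%N) F i.
  move: sum_F; rewrite (bigID (fun i : 'I_N => (j <= i)%N)) /= head_F => sum_F.
  by apply/eqP; rewrite -addr_eq0 addrC sum_F.
have Fk_ge : w k * `|P.[x k]| * g ^+ j.-1 <= `|F k|.
  rewrite /F !normrM (ger0_norm (ltW (w_gt0 kN))).
  apply: ler_wpM2l; last exact: norm_lagrange_numerator_self_ge.
  by rewrite mulr_ge0 ?normr_ge0 // ltW // w_gt0.
apply: le_trans Fk_ge _; rewrite tail_F normrN mulr_suml.
apply: (le_trans (ler_norm_sum _ _ _)); apply: ler_sum => i _.
rewrite /F !normrM (ger0_norm (ltW (w_gt0 (ltn_ord i)))) -mulrA.
rewrite ler_pM2l ?w_gt0 //; apply: ler_pM;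
  by rewrite ?normr_ge0 ?norm_horner_P_node_le ?norm_lagrange_numerator_node_le.
Qed.

Lemma zero_near_node k : (k < j)%N -> (forall l, (l < k)%N -> `|z l - x l| <= g / 2) ->
  (g / 2) ^+ j.-1 * `|z k - x k| <= `|P.[x k]|.
Proof.
move=> kj close; have kN : (k < N)%N by apply: leq_trans j_le_N.
rewrite P_prod horner_prod_XsubC (big_cat_nat (leq0n k) (ltnW kj)) /= (big_ltn kj).
rewrite !normrM [`|x k - z k|]distrC.
have g2_gt0 : 0 < g / 2 by rewrite divr_gt0.
have lo : (g / 2) ^+ (k - 0) <= `|\prod_(0 <= l < k) (x k - z l)|.
  apply: norm_prod_nat_ge (ltW g2_gt0) _ => l /andP[_ lk].
  have := close l lk; rewrite ler_norml => /andP[zl_ge _].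
  have gap_lk : x k + g <= x l by apply: gap; rewrite lk kN.
  rewrite ler_normr; apply/orP; right; lra.
have hi : (g / 2) ^+ (j - k.+1) <= `|\prod_(k.+1 <= l < j) (x k - z l)|.
  apply: norm_prod_nat_ge (ltW g2_gt0) _ => l /andP[kl lj].
  have := zero_le_node lj.
  have gap_kl : x l + g <= x k by apply: gap; rewrite kl (leq_trans lj j_le_N).
  rewrite ler_normr => ?; apply/orP; left; lra.
have -> : (g / 2) ^+ j.-1 = (g / 2) ^+ (k - 0) * (g / 2) ^+ (j - k.+1).
  by rewrite -exprD; congr (_ ^+ _); lia.
rewrite mulrCA mulrC; apply: ler_wpM2l; first exact: normr_ge0.
by apply: ler_pM => //; rewrite exprn_ge0 // ltW.
Qed.

Section ZeroDecay.
Variables (K : R) (E : nat -> R).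
Hypothesis K_ge0 : 0 <= K.
Hypothesis E_ge0 : forall k, (k < j)%N -> 0 <= E k.
Hypothesis E_mono : forall l k, (l <= k < j)%N -> E l <= E k.
Hypothesis P_node_le : forall k, (k < j)%N -> `|P.[x k]| <= K * E k.

Lemma zero_node_decay k : (k < j)%N ->
  `|z k - x k| <= K / (g / 2) ^+ j.-1 * (1 + 2 * D / g) ^+ k * E k.
Proof.
elim/ltn_ind: k => k IH kj; have kN : (k < N)%N by apply: leq_trans j_le_N.
set B := K / (g / 2) ^+ j.-1; set c := 1 + 2 * D / g.
have g2_gt0 : 0 < g / 2 by rewrite divr_gt0.
have D_ge0 := node_span_ge0 (leq_ltn_trans (leq0n k) kN).
have B_ge0 : 0 <= B by rewrite divr_ge0 // exprn_ge0 // ltW.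
have c_ge1 : 1 <= c by rewrite lerDl !mulr_ge0 // invr_ge0 ltW.
have [close|/forallPn[l far]] := boolP [forall l : 'I_k, `|z l - x l| <= g / 2].
  have near := zero_near_node kj (fun l lk => forallP close (Ordinal lk)).
  have u_le : `|z k - x k| <= B * E k.
    rewrite /B mulrAC ler_pdivlMr ?exprn_gt0 // mulrC.
    exact: le_trans near (P_node_le kj).
  apply: le_trans u_le _; apply: ler_wpM2r; first exact: E_ge0.
  by rewrite ler_peMr // exprn_ege1.
rewrite -ltNge in far.
have lk := ltn_ord l.
have M_gt : g / 2 < B * c ^+ l * E k.
  apply: lt_le_trans far (le_trans (IH l lk (ltn_trans lk kj)) _).
  apply: ler_wpM2l; first by rewrite mulr_ge0 // exprn_ge0 // (le_trans ler01 c_ge1).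
  by apply: E_mono; rewrite (ltnW lk) kj.
have cM_le : c * (B * c ^+ l * E k) <= B * c ^+ k * E k.
  have -> : c * (B * c ^+ l * E k) = B * c ^+ l.+1 * E k by rewrite exprSr; ring.
  apply: ler_wpM2r; first exact: E_ge0.
  by apply: ler_wpM2l => //; apply: ler_weXn2l.
have u_le_D : `|z k - x k| <= D by rewrite distrC dist_node_zero_le.
apply: le_trans u_le_D (le_trans _ cM_le).
set M := B * c ^+ l * E k.
have ratio_ge1 : 1 <= M / (g / 2) by rewrite ler_pdivlMr // mul1r ltW.
have -> : c * M = M + D * (M / (g / 2)).
  by rewrite /c; field; rewrite gt_eqF.
rewrite -[X in X <= _]add0r; apply: lerD; first by rewrite (le_trans (ltW g2_gt0)) // ltW.
by rewrite ler_peMr.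
Qed.

End ZeroDecay.

Lemma norm_horner_P_node_le_tail k (a e : R) : (k < j)%N -> 0 < a ->
    (\sum_(i < N | (j <= i)%N) w i) * a <= w k * e ->
  `|P.[x k]| <= D ^+ j * D ^+ j.-1 / (a * g ^+ j.-1) * e.
Proof.
move=> kj a_gt0 tail_le; have kN : (k < N)%N by apply: leq_trans j_le_N.
have D_ge0 := node_span_ge0 (leq_ltn_trans (leq0n k) kN).
have Q_ge0 : 0 <= D ^+ j * D ^+ j.-1 by rewrite mulr_ge0 ?exprn_ge0.
have weight_le := ler_wpM2r (ltW a_gt0) (weight_norm_horner_P_node_le kj).
have tail_le' := ler_wpM2r Q_ge0 tail_le.
rewrite [leRHS]mulrAC ler_pdivlMr ?mulr_gt0 ?exprn_gt0 // -(ler_pM2l (w_gt0 kN)).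
lra.
Qed.

End NodeGap.

End DiscreteOrthogonalZeros.

Section TiltedWeights.
Variables (R : realType) (N : nat) (x rho : nat -> R) (t : R).
Hypothesis rho_gt0 : forall i, (i < N)%N -> 0 < rho i.

Lemma rho_t_gt0 i : (i < N)%N -> 0 < rho_t N x rho t i.
Proof.
move=> iN; rewrite /rho_t divr_gt0 ?mulr_gt0 ?expR_gt0 ?rho_gt0 //.
rewrite (bigD1 (Ordinal iN)) //= ltr_wpDr ?mulr_gt0 ?expR_gt0 ?rho_gt0 //.
by rewrite sumr_ge0 // => l _; rewrite mulr_ge0 ?expR_ge0 // ltW ?rho_gt0.
Qed.

Hypothesis rho_sum : \sum_(i < N) rho i = 1.

Lemma tail_rho_t_le j k : 0 <= t -> (k < N)%N -> (forall i, (j <= i < N)%N -> x i <= x j) ->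
  (\sum_(i < N | (j <= i)%N) rho_t N x rho t i) * rho k <=
  rho_t N x rho t k * expR (- (2 * t * (x k - x j))).
Proof.
move=> t_ge0 kN x_le; rewrite /rho_t; set Z := \sum_(l < N) _.
have Z_ge0 : 0 <= Z by rewrite sumr_ge0 // => l _; rewrite mulr_ge0 ?expR_ge0 // ltW ?rho_gt0.
have tail_rho_le1 : \sum_(i < N | (j <= i)%N) rho i <= 1.
  rewrite -rho_sum [leRHS](bigID (fun i : 'I_N => (j <= i)%N)) /= lerDl.
  by rewrite sumr_ge0 // => i _; rewrite ltW ?rho_gt0.
have tail_le : \sum_(i < N | (j <= i)%N) rho i * expR (2 * t * x i) <= expR (2 * t * x j).
  apply: le_trans (_ : \sum_(i < N | (j <= i)%N) rho i * expR (2 * t * x j) <= _).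
    apply: ler_sum => i ji; rewrite ler_pM2l ?rho_gt0 // ler_expR.
    by apply: ler_wpM2l; [lra | apply: x_le; rewrite ji ltn_ord].
  by rewrite -mulr_suml ler_piMl ?expR_ge0.
have e_split : expR (2 * t * x j) = expR (2 * t * x k) * expR (- (2 * t * (x k - x j))).
  by rewrite -expRD; congr expR; ring.
have rhoZ_ge0 : 0 <= rho k / Z by rewrite divr_ge0 // ltW ?rho_gt0.
have := ler_wpM2r rhoZ_ge0 tail_le; rewrite e_split -mulr_suml.
lra.
Qed.

End TiltedWeights.

Theorem theorem2p5 (R : realType) (N : nat) (x rho : nat -> R) :
  (2 <= N)%N ->
  (forall i l : nat, (i < l < N)%N -> x l < x i) ->
  (forall i : nat, (i < N)%N -> 0 < rho i) ->
  \sum_(i < N) rho i = 1 ->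
  forall j : nat, (0 < j < N)%N ->
  forall k : nat, (k < j)%N ->
  exists C : R, forall t : R, 0 <= t ->
    forall (P : {poly R}) (z : nat -> R),
      monic_orth_poly N x rho t j P ->
      (forall i l : nat, (i < l < j)%N -> z l < z i) ->
      P = \prod_(i < j) ('X - (z i)%:P) ->
      `|z k - x k| <= C * expR (- (2 * t * (x k - x j))).
Proof.
move=> _ x_decr rho_gt0 rho_sum j /andP[_ j_lt_N] k kj.
have j_le_N := ltnW j_lt_N.
have [g g_gt0 gap] := exists_gap x_decr.
have [r r_gt0 r_le] := exists_pos_lower_bound rho_gt0.
pose D := x 0 - x N.-1; pose K := D ^+ j * D ^+ j.-1 / (r * g ^+ j.-1).
exists (K / (g / 2) ^+ j.-1 * (1 + 2 * D / g) ^+ k).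
move=> t t_ge0 P z [_ _ P_orth] z_decr P_prod.
have P_nat : P = \prod_(0 <= i < j) ('X - (z i)%:P) by rewrite P_prod big_mkord.
have w_gt0 := rho_t_gt0 x t rho_gt0.
have x_le_xj i : (j <= i < N)%N -> x i <= x j.
  by move=> /andP[ji iN]; apply: (decr_le x_decr); rewrite ji.
pose E l := expR (- (2 * t * (x l - x j))).
have D_ge0 : 0 <= D := node_span_ge0 x_decr (leq_ltn_trans (leq0n j) j_lt_N).
have P_node_le l : (l < j)%N -> `|P.[x l]| <= K * E l.
  move=> lj; apply: (norm_horner_P_node_le_tail j_le_N x_decr w_gt0 P_orth z_decr P_nat
                       g_gt0 gap lj r_gt0).
  apply: le_trans (tail_rho_t_le rho_gt0 rho_sum t_ge0 _ x_le_xj); last lia.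
  by apply: ler_wpM2l; [rewrite sumr_ge0 // => i _; rewrite ltW ?w_gt0 | apply: r_le; lia].
apply: (zero_node_decay j_le_N x_decr w_gt0 P_orth z_decr P_nat g_gt0 gap _ _ _ P_node_le kj).
- by rewrite divr_ge0 ?mulr_ge0 ?exprn_ge0 // ltW.
- by move=> l _; rewrite expR_ge0.
- move=> l m lmj; have : x m <= x l by apply: (decr_le x_decr); lia.
  by rewrite ler_expR; nra.
Qed.
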